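(* Let $\mathcal A\subseteq\mathrm{Mat}(\mathbb{Z}^D,p)$ be an invertible subalgebra with spread $\ell$, and let $\mathcal B$ be its commutant within $\mathrm{Mat}(\mathbb{Z}^D,p)$. Then both $\mathcal A$ and $\mathcal B$ are VS.
   Context: For $p:\mathbb{Z}^D\to\mathbb{Z}_{>0}$ and finite $S$, $\mathrm{Mat}(S,p)=\bigotimes_{s\in S}M_{p(s)}(\mathbb{C})$ with embeddings by tensoring identities; $\mathrm{Mat}(\mathbb{Z}^D,p)$ is the union. $\mathrm{Supp}(x)$ is the smallest finite $S$ with $x\in\mathrm{Mat}(S,p)$; $S^{+\ell}$ is the set of sites at $\ell_\infty$-distance at most $\ell$ from $S$. A unital $*$-subalgebra $\mathcal A$ is invertible with spread $\ell>0$ if every $x\in\mathrm{Mat}(\mathbb{Z}^D,p)$ is a finite sum $x=\sum_ia_ib_i$ with $a_i\in\mathcal A$, $b_i$ in the commutant of $\mathcal A$ within $\mathrm{Mat}(\mathbb{Z}^D,p)$, and $\mathrm{Supp}(a_i),\mathrm{Supp}(b_i)\subseteq\mathrm{Supp}(x)^{+\ell}$. A $*$-subalgebra $\mathcal C$ is VS if there is $\ell'>0$ such that for every $c\in\mathcal C\setminus\mathbb{C}\mathbf 1$ and every $s\in\mathrm{Supp}(c)$ there is $w\in\mathcal C\cap\mathrm{Mat}(\{s\}^{+\ell'},p)$ with $[c,w]\neq0$. *)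

From HB Require Import structures.
From mathcomp Require Import all_boot all_order all_algebra finmap.
From mathcomp Require Import boolp classical_sets fsbigop reals.
From mathcomp Require Import complex.

Set Implicit Arguments.
Unset Strict Implicit.
Unset Printing Implicit Defensive.

Import Order.TTheory GRing.Theory Num.Theory.
Local Open Scope classical_set_scope.
Local Open Scope ring_scope.

Definition site (D : nat) := {ffun 'I_D -> int}.

Definition linf_dist (D : nat) (x y : site D) : nat :=
  \max_(i < D) `|x i - y i|%N.

Definition thicken (D : nat) (l : nat) (S : set (site D)) : set (site D) :=
  [set x | exists2 y, S y & (linf_dist x y <= l)%N].

(* Mat(Z^D,p) is realized (faithfully) as the algebra of
   local operators acting on the free vector space spanned by the finitely
   supported configurations sigma : Z^D -> N with sigma s < p s (reference
   state 0 at every site); i.e. |sigma> = (x)_s |sigma s>.  An operator is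
   given by its matrix entries  x sigma tau = <sigma| x |tau>.               *)
Definition conf (D : nat) (p : site D -> nat) :=
  {sigma : {fsfun site D -> nat with 0%N} |
     all (fun s => (sigma s < p s)%N) (finsupp sigma)}.

Definition Op (R : rcfType) (D : nat) (p : site D -> nat) :=
  conf p -> conf p -> R[i].

Section Ops.
Variables (R : rcfType) (D : nat) (p : site D -> nat).
Local Notation C := R[i].
Local Notation Op := (@Op R D p).

Definition op_one : Op := fun s t => (s == t)%:R.
Definition op_add (x y : Op) : Op := fun s t => x s t + y s t.
Definition op_scale (a : C) (x : Op) : Op := fun s t => a * x s t.
(* matrix product; for local operators the sum has finite support *)
Definition op_mul (x y : Op) : Op :=
  fun s t => \sum_(r \in [set: conf p]) x s r * y r t.
Definition op_adj (x : Op) : Op := fun s t => (x t s)^*.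
Definition op_comm (x y : Op) : Op :=
  fun s t => op_mul x y s t - op_mul y x s t.

(* x belongs to Mat(S,p) = (x)_{s in S} M_{p(s)}(C) (tensored with identities
   outside S): x is diagonal-identity off S and its entries only depend on the
   restrictions of the configurations to S. *)
Definition local_on (S : set (site D)) (x : Op) : Prop :=
  (forall s t : conf p, (exists2 k, ~ S k & val s k <> val t k) -> x s t = 0)
  /\ (forall s t s' t' : conf p,
        (forall k, S k -> val s k = val s' k /\ val t k = val t' k) ->
        (forall k, ~ S k -> val s k = val t k) ->
        (forall k, ~ S k -> val s' k = val t' k) ->
        x s t = x s' t').

Definition in_Mat (x : Op) : Prop := exists S : {fset site D}, local_on [set k | k \in S] x.

Definition Supp (x : Op) : set (site D) :=
  [set k | forall S : {fset site D}, local_on [set j | j \in S] x -> k \in S].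

Definition unital_star_subalgebra (A : set Op) : Prop :=
  [/\ A `<=` in_Mat, A op_one,
      (forall x y, A x -> A y -> A (op_add x y)) /\
      (forall a x, A x -> A (op_scale a x)),
      (forall x y, A x -> A y -> A (op_mul x y)) &
      (forall x, A x -> A (op_adj x))].

Definition commutant (A : set Op) : set Op :=
  [set b | in_Mat b /\ forall a, A a -> op_mul a b = op_mul b a].

Definition invertible_with_spread (A : set Op) (l : nat) : Prop :=
  unital_star_subalgebra A /\ (0 < l)%N /\
  forall x, in_Mat x ->
    exists (n : nat) (a b : 'I_n -> Op),
      x = (fun s t => \sum_(i < n) op_mul (a i) (b i) s t) /\
      forall i, [/\ A (a i), commutant A (b i),
                    Supp (a i) `<=` thicken l (Supp x) &
                    Supp (b i) `<=` thicken l (Supp x)].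

Definition VS (Cc : set Op) : Prop :=
  exists l' : nat, (0 < l')%N /\
    forall c, Cc c -> ~ (exists z : C, c = op_scale z op_one) ->
      forall s, Supp c s ->
        exists w, [/\ Cc w, local_on (thicken l' [set s]) w & op_comm c w <> (fun _ _ => 0)].

End Ops.

From HB Require Import structures.
From mathcomp Require Import all_boot all_order all_algebra finmap.
From mathcomp Require Import boolp classical_sets fsbigop reals cardinality.
From mathcomp Require Import complex.

(* If c commutes with every matrix unit |a><b| acting at a site s, then c does
   not act on s, i.e. s is not in Supp c.  Invertibility writes each such unit
   as a sum of products a_i b_i with a_i in A, b_i in the commutant B, all
   supported in {s}^{+l}.  An element c of A commutes with every b_i, so if it
   also commuted with every element of A supported near s it would commute
   with the unit; hence some such element of A fails to commute with c.  The
   same argument with the roles of A and B exchanged handles c in B. *)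

Set Implicit Arguments.
Unset Strict Implicit.
Unset Printing Implicit Defensive.
Import Order.TTheory GRing.Theory Num.Theory.
Local Open Scope classical_set_scope.
Local Open Scope ring_scope.

Section LocalOperators.
Variables (R : rcfType) (D : nat) (p : site D -> nat).
Hypothesis p_pos : forall s, (0 < p s)%N.
Local Notation Op := (@Op R D p).

Lemma conf_val_lt (s : conf p) k : (val s k < p k)%N.
Proof.
case: s => f /= /allP f_lt.
by case: (finsuppP f k) => [_|kf]; [exact: p_pos | exact: f_lt].
Qed.

Lemma conf_ext (s t : conf p) : (forall k, val s k = val t k) -> s = t.
Proof. by move=> st; apply: val_inj; apply/fsfunP. Qed.

Definition conf_fsfun (F : {fset site D}) (f : site D -> nat) :
  {fsfun site D -> nat with 0%N} :=
  [fsfun k in F => (if (f k < p k)%N then f k else 0%N) | 0%N].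

Lemma conf_fsfun_lt F f :
  all (fun s => (conf_fsfun F f s < p s)%N) (finsupp (conf_fsfun F f)).
Proof.
apply/allP => k _; rewrite /conf_fsfun fsfun_fun.
by case: ifP => _; [case: ifP => // _|]; exact: p_pos.
Qed.

Definition conf_of F f : conf p := exist _ (conf_fsfun F f) (conf_fsfun_lt F f).

Lemma conf_ofE F f k : val (conf_of F f) k =
  if k \in F then (if (f k < p k)%N then f k else 0%N) else 0%N.
Proof. by rewrite /= /conf_fsfun fsfun_fun. Qed.

Definition conf_glue (F : {fset site D}) (s1 s2 : conf p) : conf p :=
  conf_of (F `|` finsupp (val s2))%fset
    (fun k => if k \in F then val s1 k else val s2 k).

Lemma conf_glueE F s1 s2 k :
  val (conf_glue F s1 s2) k = if k \in F then val s1 k else val s2 k.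
Proof.
rewrite conf_ofE inE; case: (boolP (k \in F)) => kF /=; first by rewrite conf_val_lt.
by case: (finsuppP (val s2) k) => // _; rewrite conf_val_lt.
Qed.

Definition conf_set (s : conf p) (k : site D) (a : nat) : conf p :=
  conf_of (k |` finsupp (val s))%fset (fun j => if j == k then a else val s j).

Lemma conf_setE s k a j : (a < p k)%N ->
  val (conf_set s k a) j = if j == k then a else val s j.
Proof.
move=> ak; rewrite conf_ofE !inE; case: (eqVneq j k) => [->|jk] /=; first by rewrite ak.
by case: (finsuppP (val s) j) => // _; rewrite conf_val_lt.
Qed.

Lemma conf_set_id s k : conf_set s k (val s k) = s.
Proof.
by apply: conf_ext => j; rewrite conf_setE ?conf_val_lt //; case: eqVneq => // ->.
Qed.

Lemma conf_set_set s k a b : (a < p k)%N -> (b < p k)%N ->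
  conf_set (conf_set s k a) k b = conf_set s k b.
Proof. by move=> ak bk; apply: conf_ext => j; rewrite !conf_setE //; case: eqVneq. Qed.

Lemma conf_set_eq (u v : conf p) s a : (a < p s)%N ->
  (forall k, k != s -> val u k = val v k) -> (u == conf_set v s a) = (val u s == a).
Proof.
move=> a_lt uv; apply/eqP/eqP => [->|us]; first by rewrite conf_setE // eqxx.
by apply: conf_ext => k; rewrite conf_setE //; case: eqVneq => [->//|]; exact: uv.
Qed.

Lemma local_on_sub (S T : set (site D)) (x : Op) :
  S `<=` T -> local_on S x -> local_on T x.
Proof.
move=> ST [x_diag x_restr]; split.
  by move=> s t [k nTk st_k]; apply: x_diag; exists k => // /ST.
move=> s t s' t' eqT st s't'.
have [[k [Tk nSk st_k]]|st_TS] :=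
  pselect (exists k, [/\ T k, ~ S k & val s k <> val t k]).
  have [eq_s eq_t] := eqT k Tk.
  by rewrite !x_diag //; exists k => //; rewrite -eq_s -eq_t.
have {}st_TS k : T k -> ~ S k -> val s k = val t k.
  by move=> Tk nSk; apply: contrapT => st_k; apply: st_TS; exists k.
apply: x_restr => [k /ST|k nSk|k nSk]; first exact: eqT.
  by have [Tk|nTk] := pselect (T k); [exact: st_TS | exact: st].
have [Tk|nTk] := pselect (T k); last exact: s't'.
by have [<- <-] := eqT k Tk; exact: st_TS.
Qed.

Lemma local_onI (S1 S2 : {fset site D}) (x : Op) :
  local_on [set j | j \in S1] x -> local_on [set j | j \in S2] x ->
  local_on [set j | j \in (S1 `&` S2)%fset] x.
Proof.
move=> [diag1 restr1] [diag2 restr2]; split.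
  move=> s t [k /= nk st_k]; have [k1|nk1] := boolP (k \in S1).
    by apply: diag2; exists k => //= k2; apply: nk; rewrite inE k1 k2.
  by apply: diag1; exists k => //=; exact/negP.
move=> s t s' t' eq12 st s't'.
have nS12 k : k \notin S1 \/ k \notin S2 -> ~ (k \in (S1 `&` S2)%fset).
  by rewrite inE => nk /andP[k1 k2]; case: nk => /negP.
transitivity (x (conf_glue S1 s s') (conf_glue S1 t t')).
  apply: restr1 => [k /= k1|k /= /negP nk1|k /= /negP nk1].
  - by rewrite !conf_glueE k1.
  - by apply: st; apply: nS12; left.
  - by rewrite !conf_glueE !ifN //; apply: s't'; apply: nS12; left.
apply: restr2 => [k /= k2|k /= /negP nk2|k /= /negP nk2].
- rewrite !conf_glueE; case: ifP => // k1.
  by apply: eq12; rewrite /= inE k1 k2.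
- rewrite !conf_glueE; case: ifP => k1; apply: st || apply: s't'; apply: nS12.
    by right.
  by left; rewrite k1.
- by apply: s't'; apply: nS12; right.
Qed.

Lemma local_on_avoid (x : Op) (S0 : {fset site D}) (ks : seq (site D)) :
  local_on [set j | j \in S0] x -> (forall k, k \in ks -> ~ Supp x k) ->
  exists S : {fset site D}, [/\ local_on [set j | j \in S] x,
    (S `<=` S0)%fset & forall k, k \in ks -> k \notin S].
Proof.
move=> x_S0; elim: ks => [|k ks IH] nSupp; first by exists S0.
have [S [x_S SS0 nks]] := IH (fun j jks => nSupp j (mem_behead (s := k :: ks) jks)).
have [Sk [x_Sk kSk]] : exists Sk : {fset site D},
    local_on [set j | j \in Sk] x /\ k \notin Sk.
  apply: contrapT => no_Sk; apply: (nSupp k (mem_head k ks)) => Sk x_Sk.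
  by apply: contrapT => /negP kSk; apply: no_Sk; exists Sk.
exists (S `&` Sk)%fset; split; first exact: local_onI.
  by apply: fsubset_trans SS0; exact: fsubsetIl.
by move=> j; rewrite inE => /orP[/eqP ->|/nks]; rewrite inE negb_and ?kSk ?orbT // => ->.
Qed.

Lemma local_on_Supp (x : Op) (T : set (site D)) :
  in_Mat x -> Supp x `<=` T -> local_on T x.
Proof.
move=> [S0 x_S0] SuppT.
pose ks := [seq k <- enum_fset S0 | `[< ~ T k >]].
have [|S [x_S SS0 nks]] := @local_on_avoid x S0 ks x_S0.
  by move=> k; rewrite mem_filter => /andP[/asboolP nTk _] /SuppT.
apply: local_on_sub x_S => k /= kS; apply: contrapT => nTk.
by move: (nks k); rewrite mem_filter (fsubsetP SS0 k kS) andbT kS => /(_ (asboolT nTk)).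
Qed.

(* The configurations agreeing with s off S: the only possible nonzero
   entries in row (or column) s of an operator local on S. *)
Definition conf_near (s : conf p) (S : {fset site D}) : set (conf p) :=
  [set r : conf p | forall k, k \notin S -> val r k = val s k].

Lemma conf_near_finite s S : finite_set (conf_near s S).
Proof.
pose N := (\max_(k : S) p (val k)).+1.
pose g (f : {ffun S -> 'I_N}) : conf p := conf_of (S `|` finsupp (val s))%fset
  (fun k => if insub k is Some k' then nat_of_ord (f k') else val s k).
apply: (sub_finite_set (B := g @` setT)); last exact/finite_image/finite_finset.
move=> r r_near; exists [ffun k => inord (val r (val k))] => //.
apply: conf_ext => k; rewrite conf_ofE inE; case: insubP => [k' kS ek|nkS].
  rewrite kS /= ffunE -ek inordK ?conf_val_lt // ltnS.
  apply: leq_trans (ltnW (conf_val_lt r (val k'))) _.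
  exact: (@leq_bigmax _ (fun j : S => p (val j))).
rewrite (negbTE nkS) /= r_near //.
by case: (finsuppP (val s) k) => // _; rewrite conf_val_lt.
Qed.

Lemma local_row0 S (x : Op) s r : local_on [set j | j \in S] x ->
  ~ conf_near s S r -> x s r = 0.
Proof.
move=> [x_diag _] r_far; apply: x_diag; apply: contrapT => no_k; apply: r_far.
move=> k kS; apply: contrapT => sr_k.
by apply: no_k; exists k => [/=|]; [exact/negP | move=> /esym].
Qed.

Lemma local_col0 S (x : Op) t r : local_on [set j | j \in S] x ->
  ~ conf_near t S r -> x r t = 0.
Proof.
move=> [x_diag _] r_far; apply: x_diag; apply: contrapT => no_k; apply: r_far.
by move=> k kS; apply: contrapT => rt_k; apply: no_k; exists k => //=; exact/negP.
Qed.

Lemma op_mulEl S (x y : Op) s t : local_on [set j | j \in S] x ->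
  op_mul x y s t = \sum_(r <- fset_set (conf_near s S)) x s r * y r t.
Proof.
move=> x_S; rewrite /op_mul -(fsbig_widen (conf_near s S) setT) //.
  by rewrite fsbig_finite //; exact: conf_near_finite.
by move=> r [_ r_far] /=; rewrite (local_row0 x_S r_far) mul0r.
Qed.

Lemma op_mulEr S (x y : Op) s t : local_on [set j | j \in S] y ->
  op_mul x y s t = \sum_(r <- fset_set (conf_near t S)) x s r * y r t.
Proof.
move=> y_S; rewrite /op_mul -(fsbig_widen (conf_near t S) setT) //.
  by rewrite fsbig_finite //; exact: conf_near_finite.
by move=> r [_ r_far] /=; rewrite (local_col0 y_S r_far) mulr0.
Qed.

Lemma op_mulA (x y z : Op) : in_Mat x -> in_Mat z ->
  op_mul (op_mul x y) z = op_mul x (op_mul y z).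
Proof.
move=> [Sx x_S] [Sz z_S]; apply/funext => s; apply/funext => t.
rewrite (op_mulEr _ _ _ z_S) (op_mulEl _ _ _ x_S).
under eq_bigr do rewrite (op_mulEl _ _ _ x_S) mulr_suml.
rewrite exchange_big; apply: eq_bigr => q _.
by rewrite (op_mulEr _ _ _ z_S) mulr_sumr; apply: eq_bigr => r _; rewrite mulrA.
Qed.

Lemma op_mul_sumr (x : Op) n (y : 'I_n -> Op) : in_Mat x ->
  op_mul x (fun s t => \sum_(i < n) y i s t) =
  (fun s t => \sum_(i < n) op_mul x (y i) s t).
Proof.
move=> [Sx x_S]; apply/funext => s; apply/funext => t.
rewrite (op_mulEl _ _ _ x_S); under eq_bigr do rewrite mulr_sumr.
by rewrite exchange_big; apply: eq_bigr => i _; rewrite (op_mulEl _ _ _ x_S).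
Qed.

Lemma op_mul_suml (z : Op) n (y : 'I_n -> Op) : in_Mat z ->
  op_mul (fun s t => \sum_(i < n) y i s t) z =
  (fun s t => \sum_(i < n) op_mul (y i) z s t).
Proof.
move=> [Sz z_S]; apply/funext => s; apply/funext => t.
rewrite (op_mulEr _ _ _ z_S); under eq_bigr do rewrite mulr_suml.
by rewrite exchange_big; apply: eq_bigr => i _; rewrite (op_mulEr _ _ _ z_S).
Qed.

Lemma commute_sum_mul (c : Op) n (a b : 'I_n -> Op) :
  in_Mat c -> (forall i, in_Mat (a i)) -> (forall i, in_Mat (b i)) ->
  (forall i, op_mul c (a i) = op_mul (a i) c) ->
  (forall i, op_mul c (b i) = op_mul (b i) c) ->
  let x := fun s t => \sum_(i < n) op_mul (a i) (b i) s t in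
  op_mul c x = op_mul x c.
Proof.
move=> cM aM bM ca cb x; rewrite /x op_mul_sumr // op_mul_suml //.
apply/funext => s; apply/funext => t; apply: eq_bigr => i _.
by rewrite -op_mulA // ca op_mulA // cb -op_mulA.
Qed.

(* The matrix unit |a><b| at site s, tensored with the identity elsewhere. *)
Definition site_unit (s : site D) (a b : nat) : Op :=
  fun u v => ((val v s == b) && (u == conf_set v s a))%:R.

Lemma site_unit_local s a b : (a < p s)%N ->
  local_on [set j | j \in [fset s]%fset] (site_unit s a b).
Proof.
move=> a_lt; split.
  move=> u v [k /= nk uv_k]; rewrite /site_unit.
  have ks : k != s by apply: contraPneq nk => ->; rewrite inE.
  case: (eqVneq u (conf_set v s a)) => [u_eq|]; last by rewrite andbF.
  by case: uv_k; rewrite u_eq conf_setE // (negbTE ks).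
move=> u v u' v' eq_s uv u'v'.
have [u_s v_s] := eq_s s (fset11 s).
have off_s (w w' : conf p) : (forall k, ~ k \in [fset s]%fset -> val w k = val w' k) ->
    forall k, k != s -> val w k = val w' k.
  by move=> ww' k ks; apply: ww'; rewrite inE; exact/negP.
rewrite /site_unit (conf_set_eq _ (off_s _ _ uv)) // (conf_set_eq _ (off_s _ _ u'v')) //.
by rewrite u_s v_s.
Qed.

Lemma op_mul_site_unit (c : Op) s a b u v : (a < p s)%N ->
  op_mul c (site_unit s a b) u v = if val v s == b then c u (conf_set v s a) else 0.
Proof.
move=> a_lt; rewrite /op_mul -(fsbig_widen [set conf_set v s a] setT) //.
  by rewrite fsbig_set1 /site_unit eqxx andbT; case: ifP; rewrite ?mulr1 ?mulr0.
move=> r [_ /= r_ne]; rewrite /site_unit.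
by case: (eqVneq r (conf_set v s a)) => [//|_]; rewrite andbF mulr0.
Qed.

Lemma op_site_unit_mul (c : Op) s a b u v : (a < p s)%N -> (b < p s)%N ->
  op_mul (site_unit s a b) c u v = if val u s == a then c (conf_set u s b) v else 0.
Proof.
move=> a_lt b_lt; rewrite /op_mul -(fsbig_widen [set conf_set u s b] setT) //.
  rewrite fsbig_set1 /site_unit conf_setE // !eqxx /= conf_set_set //.
  by rewrite (@conf_set_eq u u s a a_lt (fun _ _ => erefl)); case: ifP; rewrite ?mul1r ?mul0r.
move=> r [_ /= r_ne]; rewrite /site_unit.
case: (eqVneq (val r s) b) => [r_s|]; last by rewrite mul0r.
case: (eqVneq u (conf_set r s a)) => [u_eq|]; last by rewrite mul0r.
by case: r_ne; rewrite u_eq conf_set_set // -r_s conf_set_id.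
Qed.

(* Commuting with the diagonal units |b><b| forces c to be diagonal at s;
   commuting with the units |a><b| then makes its entries independent of the
   value at s, so removing s from any support of c leaves a support. *)
Lemma notin_Supp_commute_site_units (c : Op) s : in_Mat c ->
  (forall a b, (a < p s)%N -> (b < p s)%N ->
     op_mul c (site_unit s a b) = op_mul (site_unit s a b) c) -> ~ Supp c s.
Proof.
move=> [S0 [c_diag c_restr]] c_comm s_Supp.
suff c_S : local_on [set j | j \in (S0 `\ s)%fset] c.
  by have := s_Supp _ c_S; rewrite !inE eqxx.
have ks k : k \notin (S0 `\ s)%fset -> k \in S0 -> k = s.
  by rewrite !inE => /nandP[/negbNE /eqP //|/negP].
split.
  move=> u v [k /= /negP nk uv_k]; have [kS0|nkS0] := boolP (k \in S0); last first.
    by apply: c_diag; exists k => //=; exact/negP.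
  have v_s := conf_val_lt v s.
  have := congr1 (fun f => f u v) (c_comm _ _ v_s v_s).
  rewrite op_mul_site_unit // op_site_unit_mul // eqxx conf_set_id ifN //.
  by apply/eqP; rewrite -(ks k nk kS0).
move=> u v u' v' eq_S uv u'v'.
have uv_s : val u s = val v s by apply: uv => /=; rewrite !inE eqxx.
have u'_s := conf_val_lt u' s.
have := congr1 (fun f => f (conf_set u s (val u' s)) v)
  (c_comm (val u' s) (val v s) u'_s (conf_val_lt v s)).
rewrite op_mul_site_unit // op_site_unit_mul ?conf_val_lt // conf_setE //.
rewrite conf_set_set ?conf_val_lt // -uv_s conf_set_id !eqxx => <-.
apply: c_restr => [k kS0|k /negP nkS0|k /negP nkS0].
- rewrite !conf_setE //; case: eqVneq => [->|k_s].
    by split => //; apply: u'v' => /=; rewrite !inE eqxx.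
  by apply: eq_S; rewrite /= !inE kS0 andbT.
- rewrite !conf_setE //; case: eqVneq => // _.
  by apply: uv => /=; rewrite !inE (negbTE nkS0) andbF.
- by apply: u'v' => /=; rewrite !inE (negbTE nkS0) andbF.
Qed.

Lemma op_comm_eq0 (c w : Op) :
  op_comm c w = (fun _ _ => 0) -> op_mul c w = op_mul w c.
Proof.
move=> cw0; apply/funext => u; apply/funext => v; apply/eqP; rewrite -subr_eq0.
by apply/eqP; exact: (congr1 (fun f => f u v) cw0).
Qed.

Lemma thicken_sub l (X Y : set (site D)) : X `<=` Y -> thicken l X `<=` thicken l Y.
Proof. by move=> XY x [y /XY]; exists y. Qed.

Lemma invertible_noncommuting_near (A : set Op) l (c : Op) s :
  invertible_with_spread A l -> in_Mat c -> Supp c s ->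
  exists2 w, (A `|` commutant A) w /\ local_on (thicken l [set s]) w &
    op_mul c w <> op_mul w c.
Proof.
move=> [[AM _ _ _ _] [_ A_dec]] cM s_Supp.
apply: contrapT => c_comm; apply: (notin_Supp_commute_site_units cM _ s_Supp).
move=> a b a_lt b_lt.
have [|n [x [y [unit_eq xy]]]] := A_dec (site_unit s a b).
  by exists [fset s]%fset; exact: site_unit_local.
have Supp_near : thicken l (Supp (site_unit s a b)) `<=` thicken l [set s].
  by apply: thicken_sub => k /(_ _ (site_unit_local b a_lt)); rewrite inE => /eqP.
have near_comm w : A w \/ commutant A w -> Supp w `<=` thicken l (Supp (site_unit s a b)) ->
    op_mul c w = op_mul w c.
  move=> Bw w_near; apply: contrapT => cw; apply: c_comm; exists w => //; split => //.
  by apply: local_on_Supp (subset_trans w_near Supp_near); case: Bw => [/AM|[]].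
rewrite unit_eq; apply: commute_sum_mul => // i; have [Ax By Sx Sy] := xy i.
- exact: AM.
- by case: By.
- by apply: near_comm Sx; left.
- by apply: near_comm Sy; right.
Qed.

Lemma VS_of_near_noncommuting (Cc Cc' : set Op) l : (0 < l)%N ->
  (forall c s, Cc c -> Supp c s ->
     exists2 w, (Cc `|` Cc') w /\ local_on (thicken l [set s]) w &
       op_mul c w <> op_mul w c) ->
  (forall c w, Cc c -> Cc' w -> op_mul c w = op_mul w c) -> VS Cc.
Proof.
move=> l_gt0 near_nc Cc'_comm; exists l; split => // c Cc_c _ s s_Supp.
have [w [[Cw|C'w] w_near] cw] := near_nc c s Cc_c s_Supp.
  by exists w; split => // /op_comm_eq0.
by case: cw; exact: Cc'_comm.
Qed.

End LocalOperators.

Theorem lemma2p2 (R : realType) (D : nat) (p : site D -> nat)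
  (p_pos : forall s, (0 < p s)%N)
  (A : set (@Op R D p)) (l : nat) :
  invertible_with_spread A l ->
  VS A /\ VS (commutant A).
Proof.
move=> A_inv; have [[AM _ _ _ _] [l_gt0 _]] := A_inv.
have near_nc := invertible_noncommuting_near p_pos A_inv.
split.
  apply: (VS_of_near_noncommuting (Cc' := commutant A) l_gt0).
    by move=> c s /AM cM; exact: near_nc cM.
  by move=> c w Ac [_ w_comm]; rewrite w_comm.
apply: (VS_of_near_noncommuting (Cc' := A) l_gt0).
  by move=> c s [cM _] /(near_nc c s cM) [w Bw_near cw]; exists w => //; rewrite setUC.
by move=> c w [_ c_comm] Aw; rewrite c_comm.
Qed.
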